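(* There is an $F_\sigma$ ideal $\mathcal I_0$ on $\omega$ such that $\mathcal I\le_{RK}^+\mathcal I_0$ for every $F_\sigma$ ideal $\mathcal I$ on $\omega$.
   Context: An ideal on $\omega$ is a set $\mathcal I\subseteq\mathcal P(\omega)$ closed under finite unions and under taking subsets. $\mathcal P(\omega)$ is topologized via the identification of subsets with characteristic functions in $2^\omega$ (product topology). For ideals $\mathcal I,\mathcal J$ on $\omega$, $\mathcal I\le_{RK}^+\mathcal J$ means there exist $A\subseteq\omega$ and a function $\beta:A\to\omega$ such that for every $x\subseteq\omega$, $x\in\mathcal I\iff\beta^{-1}(x)\in\mathcal J$. *)

From HB Require Import structures.
From mathcomp Require Import all_boot all_order all_algebra.
From mathcomp Require Import all_classical all_reals all_analysis.
Set Implicit Arguments. Unset Strict Implicit. Unset Printing Implicit Defensive.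
Local Open Scope classical_set_scope.

(* P(omega) identified with the Cantor space 2^omega (product topology):
   a point c of cantor_space corresponds to the subset [set n | c n]. *)
Definition set_of_point (c : cantor_space) : set nat := [set n | c n].

Definition as_cantor (I : set (set nat)) : set cantor_space :=
  [set c | I (set_of_point c)].

Definition Fsigma (T : topologicalType) (S : set T) : Prop :=
  exists F : nat -> set T, (forall n, closed (F n)) /\ S = \bigcup_n F n.

Definition is_ideal (I : set (set nat)) : Prop :=
  I set0 /\
  (forall a b, I a -> I b -> I (a `|` b)) /\
  (forall a b, b `<=` a -> I a -> I b).

Definition Fsigma_ideal (I : set (set nat)) : Prop :=
  is_ideal I /\ Fsigma (as_cantor I).

(* I <=_RK^+ J : there are A ⊆ ω and beta : A -> ω (values of beta outside A
   are irrelevant) with x ∈ I <-> beta^{-1}(x) ∈ J for every x ⊆ ω. *)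
Definition RK_plus (I J : set (set nat)) : Prop :=
  exists (A : set nat) (beta : nat -> nat),
    forall x : set nat, I x <-> J (A `&` (beta @^-1` x)).

From mathcomp Require Import all_boot all_order all_algebra.
From mathcomp Require Import all_classical all_reals all_analysis.
From mathcomp Require Import zify.

(* An F_sigma ideal I is the increasing union of closed sets G_n of the Cantor
   space.  By compactness, x lies in I as soon as, for some k, every initial
   segment x ∩ [0, K) is covered by the traces on [0, K) of k points of G_k,
   since a union of k members of I is in I.  A code (n, K, H) names a level n
   and a finite list H of subsets of [0, K); Iuniv collects the y such that, for
   some k, along every code of level at least k the coordinates where y meets
   the code are covered by k members of H.  Listing the traces of G_n on [0, K)
   in the codes, a set x ∈ G_p is sent into Iuniv, witnessed by the single trace
   x ∩ [0, K); conversely the covers at level k witness x ∈ I. *)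

Set Implicit Arguments.
Unset Strict Implicit.
Unset Printing Implicit Defensive.
Local Open Scope classical_set_scope.

Lemma nbhs_prefix (z : cantor_space) (N : nat) :
  nbhs z [set w : cantor_space | forall i, (i < N)%N -> w i = z i].
Proof.
elim: N => [|N IH]; first exact: filterS filterT.
have coordN : nbhs z [set w : cantor_space | w N = z N].
  apply: (@proj_continuous nat (fun _ => bool) N z [set z N]).
  exact/principal_filterP.
apply: filterS (filterI IH coordN) => w [wz wzN] i.
by rewrite ltnS leq_eqVlt => /orP[/eqP->//|]; exact: wz.
Qed.

Lemma closed_prefix_determined (S : set cantor_space) (M : nat) :
  (forall p q, (forall i, (i < M)%N -> p i = q i) -> S p -> S q) -> closed S.
Proof.
move=> Sdet p clp; have [q [Sq qp]] := clp _ (nbhs_prefix p M).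
exact: Sdet Sq.
Qed.

Lemma cantor_cluster (G : set cantor_space) (s : nat -> cantor_space) :
  closed G -> (forall K, G (s K)) ->
  exists2 z, G z & forall N, exists2 K, (N <= K)%N &
    forall i, (i < N)%N -> s K i = z i.
Proof.
move=> clG Gs.
have cG : compact G := subclosed_compact clG cantor_space_compact (@subsetT _ G).
have [|z [Gz clz]] := cG (s @ \oo) _; first by exists 0%N => // K _; exact: Gs.
exists z => // N.
have tailN : (s @ \oo) (s @` [set K | (N <= K)%N]) by exists N => // K NK; exists K.
by have [_ [[K NK <-] sKz]] := clz _ _ tailN (nbhs_prefix z N); exists K.
Qed.

Lemma cantor_cover_of_prefixes (G : set cantor_space) (k : nat) (x : set nat) :
  closed G ->
  (forall K, exists2 f : nat -> cantor_space, (forall j, (j < k)%N -> G (f j)) &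
     x `&` `I_K `<=` \bigcup_(j < k) set_of_point (f j)) ->
  exists2 f : nat -> cantor_space, (forall j, (j < k)%N -> G (f j)) &
     x `<=` \bigcup_(j < k) set_of_point (f j).
Proof.
(* The k-th points cluster at some z; the coordinates outside z are then covered
   by the first k points, and z takes care of the rest. *)
move=> clG; elim: k x => [|k IH] x prefix_cover.
  exists (fun _ _ => false) => // i xi.
  by have [f _ /(_ i (conj xi (ltnSn i)))[]] := prefix_cover i.+1.
have /choice [F FK] : forall K, exists f : nat -> cantor_space,
    (forall j, (j < k.+1)%N -> G (f j)) /\
    x `&` `I_K `<=` \bigcup_(j < k.+1) set_of_point (f j).
  by move=> K; have [f ? ?] := prefix_cover K; exists f.
have [FG Fcover] := all_and2 FK.
have [z Gz zF] := cantor_cluster clG (fun K => FG K k (ltnSn k)).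
pose x' := x `&` [set i | ~~ z i].
have [|g gG gcover] := IH x'.
  move=> N; have [K NK FKz] := zF N.
  exists (F K) => [j jk|i [[xi zi] iN]]; first exact/FG/ltnW.
  have [j /= jk Fj] := Fcover K i (conj xi (leq_trans iN NK)).
  exists j => //=; rewrite ltn_neqAle -ltnS jk andbT.
  by apply: contraNneq zi => ejk; rewrite -(FKz i iN) -ejk.
exists (fun j => if (j < k)%N then g j else z) => [j _|i xi].
  by case: ifP => // /gG.
have [zi|nzi] := boolP (z i); first by exists k => //=; rewrite ltnn.
have [j /= jk gj] := gcover i (conj xi nzi).
by exists j; [exact: ltnW | rewrite /= jk].
Qed.

Definition covers (P : set (set nat)) (k : nat) (s : set nat) : Prop :=
  exists m (f : nat -> set nat),
    [/\ (m <= k)%N, forall j, (j < m)%N -> P (f j) & s `<=` \bigcup_(j < m) f j].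

Lemma coversS P k (s s' : set nat) : s `<=` s' -> covers P k s' -> covers P k s.
Proof. by move=> ss' [m [f [mk fP cover]]]; exists m, f; split=> // i /ss'/cover. Qed.

Lemma coversU P k1 k2 s1 s2 :
  covers P k1 s1 -> covers P k2 s2 -> covers P (k1 + k2) (s1 `|` s2).
Proof.
move=> [m1 [f1 [mk1 fP1 cover1]]] [m2 [f2 [mk2 fP2 cover2]]].
exists (m1 + m2)%N, (fun j => if (j < m1)%N then f1 j else f2 (j - m1)%N).
split=> [|j jm|i [/cover1 [j /= jm fj]|/cover2 [j /= jm fj]]]; first exact: leq_add.
- by case: ifP => j_m1; [exact: fP1 | apply: fP2; lia].
- by exists j => /=; [lia | rewrite jm].
- exists (j + m1)%N => /=; first lia.
  by rewrite ifN ?addnK //; lia.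
Qed.

Lemma covers_refine (P Q : set (set nat)) k s :
  (forall a, P a -> exists2 b, Q b & a `<=` b) -> covers P k s -> covers Q k s.
Proof.
move=> PQ [m [f [mk fP cover]]].
have /choice [g fg] : forall j, exists b, (j < m)%N -> Q b /\ f j `<=` b.
  move=> j; have [jm|_] := ltnP j m; last by exists setT.
  by have [b ? ?] := PQ _ (fP j jm); exists b.
exists m, g; split=> // [j /fg[]//|i /cover [j jm fji]].
by exists j => //; have [_ /(_ i fji)] := fg j jm.
Qed.

Lemma ideal_covers (I : set (set nat)) P k s :
  is_ideal I -> P `<=` I -> covers P k s -> I s.
Proof.
move=> [Iset0 [IU Isub]] PI [m [f [_ fP cover]]]; apply: Isub cover _.
elim: m fP => [|m IH] fP; first by rewrite bigcup0.
rewrite bigcup_mkord big_ord_recr /= -bigcup_mkord.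
by apply: IU; [apply: IH => j jm; exact/fP/ltnW | exact/PI/fP].
Qed.

Lemma covers_of_prefixes (G : set cantor_space) k (x : set nat) : closed G ->
  (forall K, covers (set_of_point @` G) k (x `&` `I_K)) ->
  covers (set_of_point @` G) k x.
Proof.
move=> clG prefix_cover.
have [[z0 Gz0]|noG] := pselect (exists z, G z); last first.
  exists 0%N, (fun _ => set0); split=> // i xi.
  have [m [f [_ fG /(_ i (conj xi (ltnSn i))) [j /= jm _]]]] := prefix_cover i.+1.
  by have [z Gz _] := fG j jm; case: noG; exists z.
have [K|g gG gcover] := cantor_cover_of_prefixes (k := k) (x := x) clG.
  have [m [f [mk fG cover]]] := prefix_cover K.
  have /choice [g fg] : forall j, exists z, (j < m)%N -> G z /\ set_of_point z = f j.
    move=> j; have [jm|_] := ltnP j m; last by exists z0.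
    by have [z ? ?] := fG j jm; exists z.
  exists (fun j => if (j < m)%N then g j else z0) => [j _|i /cover [j /= jm fji]].
    by case: ifP => // /fg[].
  by exists j => /=; [exact: leq_trans mk | rewrite jm; have [_ ->] := fg j jm].
by exists k, (set_of_point \o g); split=> // j /gG Ggj; exists (g j).
Qed.

Lemma Fsigma_nondecreasing (T : topologicalType) (S : set T) : Fsigma S ->
  exists G : nat -> set T, [/\ forall n, closed (G n),
    {homo G : m n / (m <= n)%N >-> m `<=` n} & S = \bigcup_n G n].
Proof.
move=> [F [Fcl ->]]; exists (fun n => \bigcup_(p in `I_n.+1) F p); split.
- by move=> n; apply: closed_bigcup => //; exact: finite_II.
- by move=> m n mn z [p /= pm Fpz]; exists p => //=; exact: leq_trans mn.
- apply/seteqP; split=> z [p _ Fpz]; first by exists p => //; exists p => /=.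
  by case: Fpz => q _ Fqz; exists q.
Qed.

Definition Code := (nat * nat * seq (seq nat))%type.

Definition code (c : Code) (i : nat) : nat := pickle (c, i).

Definition set_of_seq (t : seq nat) : set nat := [set i | i \in t].

(* The bound N makes each condition depend on finitely many coordinates of y,
   which is what makes Iuniv F_sigma. *)
Definition Iuniv (y : set nat) : Prop :=
  exists k, forall (c : Code) N, (k <= c.1.1)%N ->
    covers (set_of_seq @` [set t | t \in c.2]) k [set i | (i < N)%N /\ y (code c i)].

Lemma Iuniv_ideal : is_ideal Iuniv.
Proof.
split; [|split].
- by exists 0%N => c N _; exists 0%N, (fun _ => set0); split=> // i [_ []].
- move=> a b [k1 a_cov] [k2 b_cov]; exists (k1 + k2)%N => c N kc.
  apply: coversS _ (coversU (a_cov c N _) (b_cov c N _)); [|lia|lia].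
  by move=> i [iN [ai|bi]]; [left|right].
- move=> a b ba [k a_cov]; exists k => c N kc.
  by apply: coversS _ (a_cov c N kc) => i [iN /ba].
Qed.

Lemma Iuniv_Fsigma : Fsigma (as_cantor Iuniv).
Proof.
exists (fun k => \bigcap_(cN in [set cN : Code * nat | (k <= cN.1.1.1)%N])
  [set p : cantor_space | covers (set_of_seq @` [set t | t \in cN.1.2]) k
                            [set i | (i < cN.2)%N /\ p (code cN.1 i)]]); split.
  move=> k; apply: closed_bigI => -[c N] _.
  apply: (@closed_prefix_determined _ (\max_(i < N) code c i).+1) => p q pq /=.
  apply: coversS => i [iN qi]; split=> //; rewrite pq //.
  by rewrite ltnS; exact: (@leq_bigmax _ (fun j : 'I_N => code c j) (Ordinal iN)).
apply/seteqP; split=> p.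
  by move=> [k p_cov]; exists k => // -[c N]; exact: p_cov.
by move=> [k _ p_cov]; exists k => c N kc; exact: (p_cov (c, N)).
Qed.

Definition code_index (p : nat) : nat :=
  if unpickle p : option (Code * nat) is Some (_, i) then i else 0%N.

Lemma code_indexK c i : code_index (code c i) = i.
Proof. by rewrite /code_index /code pickleK. Qed.

Definition point_of_set (x : set nat) : cantor_space := fun n => `[< x n >].

Lemma point_of_setK x : set_of_point (point_of_set x) = x.
Proof. by apply/seteqP; split=> n /asboolP. Qed.

Fixpoint iota_subseqs (K : nat) : seq (seq nat) :=
  if K is K'.+1 then iota_subseqs K' ++ [seq rcons t K' | t <- iota_subseqs K']
  else [:: [::]].

Lemma filter_iota_subseqs (P : pred nat) K : [seq i <- iota 0 K | P i] \in iota_subseqs K.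
Proof.
elim: K => [|K IH]; first by rewrite inE.
rewrite -[K.+1]addn1 iotaD filter_cat add0n addn1 /= mem_cat.
case: (P K); rewrite /= ?cats0 ?IH //.
by rewrite cats1 (map_f (fun t => rcons t K)) ?orbT.
Qed.

Section Reduction.
Variables (I : set (set nat)) (G : nat -> set cantor_space).
Hypotheses (Iid : is_ideal I) (Gcl : forall n, closed (G n))
  (Gmono : {homo G : m n / (m <= n)%N >-> m `<=` n})
  (IG : as_cantor I = \bigcup_n G n).

Definition traces (n K : nat) : seq (seq nat) :=
  [seq t <- iota_subseqs K | `[< exists2 z, G n z & set_of_seq t `<=` set_of_point z >]].

Definition reduction_domain : set nat :=
  [set p | exists n K i, (i < K)%N /\ p = code (n, K, traces n K) i].

Definition pullback (x : set nat) : set nat :=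
  reduction_domain `&` (code_index @^-1` x).

Lemma pullback_code x c i : pullback x (code c i) <->
  (exists n K, c = (n, K, traces n K) /\ (i < K)%N) /\ x i.
Proof.
rewrite /pullback /preimage /= code_indexK; split.
  by move=> [[n [K [j [jK /(pcan_inj pickleK) [-> ->]]]]] xi]; split=> //; exists n, K.
by move=> [[n [K [-> iK]]] xi]; split=> //; exists n, K, i.
Qed.

Lemma Iuniv_pullback x : I x -> Iuniv (pullback x).
Proof.
move=> Ix; have : as_cantor I (point_of_set x) by rewrite /as_cantor /= point_of_setK.
rewrite IG => -[p _ Gpx]; exists p.+1 => c N pc.
have [[n [K ec]]|nocode] := pselect (exists n K, c = (n, K, traces n K)); last first.
  exists 0%N, (fun _ => set0); split=> // i [_ /pullback_code [[n [K [ec _]]] _]].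
  by case: nocode; exists n, K.
pose t := [seq i <- iota 0 K | `[< x i >]].
exists 1%N, (fun _ => set_of_seq t); rewrite ec /= in pc *.
split=> // [j _|i [_ /pullback_code [[n' [K' [[_ <- _] iK]]] xi]]].
- exists t => //; rewrite mem_filter filter_iota_subseqs andbT; apply/asboolP.
  exists (point_of_set x); first exact: Gmono (ltnW pc) _ Gpx.
  by rewrite point_of_setK => i; rewrite /set_of_seq /= mem_filter => /andP[/asboolP].
- exists 0%N => //; rewrite /set_of_seq /= mem_filter mem_iota add0n leq0n iK.
  by rewrite !andbT; exact/asboolP.
Qed.

Lemma pullback_Iuniv x : Iuniv (pullback x) -> I x.
Proof.
move=> [k x_cov].
have Gk_I : set_of_point @` G k `<=` I.
  by move=> _ [z Gz <-]; have : as_cantor I z by rewrite IG; exists k.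
apply: (ideal_covers (k := k) Iid Gk_I); apply: covers_of_prefixes => [|K]; first exact: Gcl.
apply: coversS _ (covers_refine _ (x_cov (k, K, traces k K) K (leqnn k))).
  by move=> i [xi iK]; split=> //; apply/pullback_code; split=> //; exists k, K.
move=> _ [t + <-]; rewrite /= mem_filter => /andP[/asboolP[z Gz tz] _].
by exists (set_of_point z) => //; exists z.
Qed.

End Reduction.

Theorem mainTheorem17 :
  exists I0 : set (set nat), Fsigma_ideal I0 /\
    forall I : set (set nat), Fsigma_ideal I -> RK_plus I I0.
Proof.
exists Iuniv; split; first by split; [exact: Iuniv_ideal | exact: Iuniv_Fsigma].
move=> I [Iid /Fsigma_nondecreasing [G [Gcl Gmono IG]]].
exists (reduction_domain G), code_index => x; split.
- exact: Iuniv_pullback.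
- exact: pullback_Iuniv.
Qed.
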